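(* Let $q$ be a prime power and let $l$ be an odd prime coprime to $q$. Then either every monic irreducible factor of $x^{l}-1$ in $\mathbb{F}_{q^2}[x]$ is SCRIM, or $x-1$ is the only SCRIM factor of $x^{l}-1$ in $\mathbb{F}_{q^2}[x]$.
   Context: $\mathbb{F}_{q^2}$ is the finite field with $q^2$ elements. For $\alpha\in\mathbb{F}_{q^2}$ put $\bar\alpha=\alpha^q$, and for $f(x)=\sum_i f_ix^i$ put $\overline{f(x)}=\sum_i \bar f_i x^i$. For $f(x)$ with $f(0)\neq 0$, $f^*(x)=x^{\deg f}f(0)^{-1}f(1/x)$ and $f^\dagger(x)=\overline{f^*(x)}$. A polynomial is SCRIM if it is monic, irreducible over $\mathbb{F}_{q^2}$, has nonzero constant term, and satisfies $f=f^\dagger$. A SCRIM factor of $x^n-1$ is a SCRIM polynomial dividing $x^n-1$ in $\mathbb{F}_{q^2}[x]$. *)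

From HB Require Import structures.
From mathcomp Require Import all_boot all_order all_algebra.
Set Implicit Arguments. Unset Strict Implicit. Unset Printing Implicit Defensive.
Import GRing.Theory.
Local Open Scope ring_scope.

(* F plays the role of F_{q^2}; conjugation is a |-> a^q. *)

Definition conj_poly (F : finFieldType) (q : nat) (f : {poly F}) : {poly F} :=
  map_poly (fun a : F => a ^+ q) f.

(* fstar(x) = x^{deg f} f(0)^{-1} f(1/x): coefficient j is f(0)^{-1} f_{deg f - j} *)
Definition recip_poly (F : finFieldType) (f : {poly F}) : {poly F} :=
  (f`_0)^-1 *: \poly_(j < size f) f`_((size f).-1 - j).

Definition dagger_poly (F : finFieldType) (q : nat) (f : {poly F}) : {poly F} :=
  conj_poly q (recip_poly f).

Definition SCRIM (F : finFieldType) (q : nat) (f : {poly F}) : Prop :=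
  [/\ f \is monic, irreducible_poly f, f`_0 != 0 & f = dagger_poly q f].

From HB Require Import structures.
From mathcomp Require Import all_boot all_order all_algebra.
From mathcomp Require Import qfpoly finfield cyclic.
From Stdlib Require Import Classical.
Set Implicit Arguments. Unset Strict Implicit. Unset Printing Implicit Defensive.
Import GRing.Theory.
Local Open Scope ring_scope.

(* Let a be a root, in some extension field, of a monic irreducible factor f of x^l - 1
   over F = F_{q^2}. The roots of f are the conjugates a^{q^{2j}}, and f^dagger is monic of
   the same degree with the root a^{-q}; so f = f^dagger iff a^{-q} = a^{q^{2j}} for some j.
   For a <> 1 the order of a is l, and this says l | q^{2j} + q, a condition that does not
   depend on f: if it holds for some j every factor is SCRIM, otherwise only x - 1 is. *)

Section FrobeniusPower.
Variables (R : comNzRingType) (p e : nat).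

(* The characteristic proof is an argument so that the morphism instances below can be
   declared for frobenius_pow. *)
Definition frobenius_pow (_ : p \in [pchar R]) (x : R) := x ^+ (p ^ e)%N.

Hypothesis pcharRp : p \in [pchar R].

Lemma pchar_nat_expn : [pchar R].-nat (p ^ e)%N.
Proof.
rewrite (eq_pnat _ (pcharf_eq pcharRp)) pnatX pnat_id ?orbT //.
exact: pcharf_prime pcharRp.
Qed.

Fact frobenius_pow_is_zmod_morphism : zmod_morphism (frobenius_pow pcharRp).
Proof.
by move=> x y; rewrite /frobenius_pow exprDn_pchar ?exprNn_pchar ?pchar_nat_expn.
Qed.

Fact frobenius_pow_is_monoid_morphism : monoid_morphism (frobenius_pow pcharRp).
Proof. by split=> [|x y]; rewrite /frobenius_pow ?expr1n ?exprMn. Qed.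

HB.instance Definition _ := GRing.isZmodMorphism.Build R R (frobenius_pow pcharRp)
  frobenius_pow_is_zmod_morphism.
HB.instance Definition _ := GRing.isMonoidMorphism.Build R R (frobenius_pow pcharRp)
  frobenius_pow_is_monoid_morphism.

End FrobeniusPower.

Section ExtensionRoots.
Variables (F L : fieldType) (phi : {rmorphism F -> L}).
Local Notation "f ^phi" := (map_poly phi f) (at level 2, format "f ^phi").

Lemma irreducible_dvdp_common_root (f g : {poly F}) b :
  irreducible_poly f -> root f^phi b -> root g^phi b -> f %| g.
Proof.
move=> f_irr fb gb; apply: contraT => f_ndvd_g.
have /coprimep_root/(_ fb) : coprimep f^phi g^phi.
  by rewrite coprimep_map irreducible_poly_coprime.
by rewrite -rootE gb.
Qed.

Lemma monic_irreducible_root (f : {poly F}) c :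
  f \is monic -> irreducible_poly f -> root f^phi (phi c) -> f = 'X - c%:P.
Proof.
move=> f_monic f_irr fc.
have f_dvd : f %| 'X - c%:P.
  by apply: irreducible_dvdp_common_root f_irr fc _; rewrite map_polyXsubC root_XsubC.
apply/eqP; rewrite -eqp_monic ?monicXsubC //.
by apply: (irredp_XsubC c).2 f_dvd; rewrite gtn_eqF //; case: f_irr.
Qed.

Lemma unity_root_dvdp (f : {poly F}) n a : f %| 'X^n - 1 -> root f^phi a -> a ^+ n = 1.
Proof.
rewrite -(dvdp_map phi) => /root_dvdp f_dvd /f_dvd.
by rewrite rmorphB /= map_polyXn rmorph1 /root !hornerE subr_eq0 => /eqP.
Qed.

End ExtensionRoots.

Lemma exists_root_in_extension (F : fieldType) (f : {poly F}) :
  irreducible_poly f -> f \is monic ->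
  exists (L : fieldType) (phi : {rmorphism F -> L}) (a : L), root (map_poly phi f) a.
Proof.
move=> f_irr f_monic; pose f_mi : monic_irreducible_poly f := (f_irr, f_monic).
exists {poly %/ f with f_mi}, (qfpoly_const f_mi), (in_qpoly f 'X).
apply/rootP; have := in_qpoly_comp_horner f f 'X; rewrite comp_polyXr => <-.
by apply: val_inj => /=; rewrite (mk_monicE f_mi) Pdiv.RingMonic.rmodpp.
Qed.

Lemma coef0_dvdp_Xn_sub1 (R : idomainType) (f : {poly R}) n :
  (0 < n)%N -> f %| 'X^n - 1 -> f`_0 != 0.
Proof.
move=> n_gt0 /root_dvdp f_dvd; apply: contraTneq isT => f0.
have /f_dvd : root f 0 by rewrite rootE horner_coef0 f0.
by rewrite /root !hornerE expr0n gtn_eqF // sub0r oppr_eq0 oner_eq0.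
Qed.

Section Reciprocal.
Variable F : finFieldType.

Lemma size_recip_poly (f : {poly F}) : f`_0 != 0 -> size (recip_poly f) = size f.
Proof. by move=> f0; rewrite size_scale ?invr_eq0 // size_poly_eq //= subnn. Qed.

Lemma recip_poly_monic (f : {poly F}) : f`_0 != 0 -> recip_poly f \is monic.
Proof.
move=> f0; have f_gt0 : (0 < size f)%N.
  by rewrite size_poly_gt0; apply: contraNneq f0 => ->; rewrite coef0.
by rewrite monicE lead_coefZ lead_coef_poly //= subnn ?mulVf.
Qed.

Variables (p k : nat).
Hypothesis pcharFp : p \in [pchar F].

Lemma dagger_polyE (f : {poly F}) :
  dagger_poly (p ^ k) f = map_poly (frobenius_pow k pcharFp) (recip_poly f).
Proof. by []. Qed.

Lemma size_dagger_poly (f : {poly F}) : f`_0 != 0 -> size (dagger_poly (p ^ k) f) = size f.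
Proof. by move=> f0; rewrite dagger_polyE size_map_poly size_recip_poly. Qed.

Lemma dagger_poly_monic (f : {poly F}) : f`_0 != 0 -> dagger_poly (p ^ k) f \is monic.
Proof. by move=> f0; rewrite dagger_polyE map_monic recip_poly_monic. Qed.

End Reciprocal.

Section FiniteFieldRoots.
Variables (F : finFieldType) (L : fieldType) (phi : {rmorphism F -> L}).
Local Notation "f ^phi" := (map_poly phi f) (at level 2, format "f ^phi").

Lemma fixed_expr_card_image (c : L) : c ^+ #|F| = c -> exists a, c = phi a.
Proof.
move=> c_fixed.
have [/existsP[a /eqP <-]|c_new] := boolP [exists a, phi a == c]; first by exists a.
pose P : {poly L} := 'X^#|F| - 'X.
have size_P : size P = #|F|.+1.
  by rewrite size_polyDl ?size_polyXn // size_polyN size_polyX ltnS finNzRing_gt1.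
suff: (size (c :: map phi (enum F)) < size P)%N.
  by rewrite /= size_map -cardE size_P ltnn.
apply: max_poly_roots; first by rewrite -size_poly_eq0 size_P.
  apply/andP; split; first by rewrite /root !hornerE c_fixed subrr.
  by apply/allP => _ /mapP[a _ ->]; rewrite /root !hornerE -rmorphXn expf_card subrr.
rewrite /= map_inj_uniq ?enum_uniq ?andbT; last exact: fmorph_inj.
by apply: contra c_new => /mapP[a _ ->]; apply/existsP; exists a.
Qed.

Lemma fixed_poly_image (P : {poly L}) :
  (forall i, P`_i ^+ #|F| = P`_i) -> exists g, P = g^phi.
Proof.
move=> P_fixed.
have coefP i : exists a, P`_i == phi a.
  by have [a ->] := fixed_expr_card_image (P_fixed i); exists a.
exists (\poly_(i < size P) xchoose (coefP i)).
apply/polyP => i; rewrite coef_map coef_poly; case: ltnP => [_|P_le_i].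
  exact/eqP/(xchooseP (coefP i)).
by rewrite nth_default //; apply/esym/rmorph0.
Qed.

Variables (p n : nat).
Hypotheses (pcharFp : p \in [pchar F]) (cardF : #|F| = (p ^ n)%N).
Let pcharLp := rmorph_pchar phi pcharFp.

Lemma root_map_frobenius_pow e (f : {poly F}) b :
  root f^phi b -> root (map_poly (frobenius_pow e pcharFp) f)^phi (b ^+ (p ^ e)).
Proof.
move=> /rootP fb; apply/rootP.
have -> : (map_poly (frobenius_pow e pcharFp) f)^phi =
          map_poly (frobenius_pow e pcharLp) f^phi.
  by rewrite -!map_poly_comp; apply: eq_map_poly => a /=; rewrite /frobenius_pow rmorphXn.
by rewrite -[b ^+ _]/(frobenius_pow e pcharLp b) horner_map fb rmorph0.
Qed.

Lemma root_expr_card (f : {poly F}) b j : root f^phi b -> root f^phi (b ^+ (#|F| ^ j)).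
Proof.
move=> fb; elim: j => [|j IHj]; first by rewrite expn0 expr1.
have := root_map_frobenius_pow n IHj.
rewrite expnSr exprM -cardF map_poly_id // => a _.
by rewrite /frobenius_pow -cardF expf_card.
Qed.

Lemma orbit_poly_image (a : L) m : (0 < m)%N -> a ^+ (#|F| ^ m) = a ->
  exists h : {poly F},
    h^phi = \prod_(b <- [seq a ^+ (#|F| ^ j) | j <- iota 0 m]) ('X - b%:P).
Proof.
case: m => // m _ a_period.
pose g j := a ^+ (#|F| ^ j); pose frobL := frobenius_pow n pcharLp.
have frob_s : map frobL (map g (iota 0 m.+1)) = rot 1 (map g (iota 0 m.+1)).
  have -> : map frobL (map g (iota 0 m.+1)) = map g (iota 1 m.+1).
    rewrite (iotaDl 1 0) -!map_comp; apply: eq_map => j /=.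
    by rewrite /frobL /frobenius_pow -cardF /g -exprM -expnSr.
  rewrite -[m.+1]addn1 iotaD addn1 map_cat /= rot1_cons cats1 add1n.
  by rewrite /g expn0 expr1 a_period.
have prod_fixed : map_poly frobL (\prod_(b <- map g (iota 0 m.+1)) ('X - b%:P))
                  = \prod_(b <- map g (iota 0 m.+1)) ('X - b%:P).
  rewrite rmorph_prod (eq_bigr _ (fun b _ => map_polyXsubC _ b)).
  rewrite -(big_map frobL xpredT (fun b => 'X - b%:P)) frob_s.
  by apply: perm_big; rewrite perm_rot.
have [h ->] : exists h, \prod_(b <- map g (iota 0 m.+1)) ('X - b%:P) = h^phi.
  apply: fixed_poly_image => i; have := congr1 (fun P : {poly L} => P`_i) prod_fixed.
  by rewrite coef_map /= /frobL /frobenius_pow -cardF.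
by exists h.
Qed.

Lemma irreducible_root_conjugate (f : {poly F}) (a b : L) m :
  irreducible_poly f -> root f^phi a -> (0 < m)%N -> a ^+ (#|F| ^ m) = a ->
  root f^phi b -> exists j, b = a ^+ (#|F| ^ j).
Proof.
move=> f_irr fa m_gt0 a_period fb.
have [h h_orbit] := orbit_poly_image m_gt0 a_period.
have f_dvd_h : f %| h.
  apply: irreducible_dvdp_common_root f_irr fa _.
  rewrite h_orbit root_prod_XsubC.
  by case: m m_gt0 {a_period h_orbit} => //= m _; rewrite inE expr1 eqxx.
move: fb; rewrite -(dvdp_map phi) in f_dvd_h => /(root_dvdp f_dvd_h).
by rewrite h_orbit root_prod_XsubC => /mapP[j _ ->]; exists j.
Qed.

Lemma root_recip_poly (f : {poly F}) b :
  b != 0 -> root f^phi b -> root (recip_poly f)^phi b^-1.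
Proof.
move=> b0 /rootP fb; apply/rootP; rewrite map_polyZ hornerZ.
set d := size f; set r := \poly_(j < d) _.
suff -> : (r^phi).[b^-1] = 0 by rewrite mulr0.
apply: (mulfI (expf_neq0 d.-1 b0)); rewrite mulr0 -fb.
rewrite (@horner_coef_wide _ d) ?size_map_poly ?size_poly // horner_coef size_map_poly.
rewrite mulr_sumr [RHS](reindex_inj rev_ord_inj); apply: eq_bigr => i _ /=.
have i_le : (i <= d.-1)%N by rewrite -ltnS prednK ?(leq_ltn_trans _ (ltn_ord i)).
rewrite !coef_map coef_poly ltn_ord subnS predn_sub mulrCA; congr (_ * _).
by rewrite -{1}(subnK i_le) exprD exprVn mulfK ?expf_neq0.
Qed.

Variable k : nat.

Lemma root_dagger_poly (f : {poly F}) b :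
  b != 0 -> root f^phi b -> root (dagger_poly (p ^ k) f)^phi (b^-1 ^+ (p ^ k)).
Proof. by move=> b0 /(root_recip_poly b0)/(root_map_frobenius_pow k). Qed.

Lemma dagger_poly_fixedP (f : {poly F}) a :
  f \is monic -> irreducible_poly f -> f`_0 != 0 -> root f^phi a ->
  f = dagger_poly (p ^ k) f <-> root f^phi (a^-1 ^+ (p ^ k)).
Proof.
move=> f_monic f_irr f0 fa.
have a0 : a != 0.
  by apply: contraNneq f0 => a0; move: fa; rewrite a0 /root horner_coef0 coef_map fmorph_eq0.
split=> [fE|fa']; first by rewrite fE; apply: root_dagger_poly.
have f_dvd := irreducible_dvdp_common_root f_irr fa' (root_dagger_poly a0 fa).
apply/eqP; rewrite -eqp_monic ?dagger_poly_monic // -dvdp_size_eqp //.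
by rewrite size_dagger_poly.
Qed.

End FiniteFieldRoots.

Lemma SCRIM_XsubC1 (F : finFieldType) p k :
  p \in [pchar F] -> SCRIM (p ^ k) ('X - 1 : {poly F}).
Proof.
move=> pcharFp; rewrite -polyC1.
have X1_coef0 : ('X - 1%:P : {poly F})`_0 != 0.
  by rewrite coefB coefX coefC sub0r oppr_eq0 oner_eq0.
have X1_root : root (map_poly idfun ('X - 1%:P : {poly F})) 1.
  by rewrite map_poly_id // root_XsubC.
split=> //; [exact: monicXsubC | exact: irredp_XsubC |].
apply/(dagger_poly_fixedP pcharFp k (monicXsubC _) (irredp_XsubC _) X1_coef0 X1_root).
by rewrite invr1 expr1n.
Qed.

Lemma expr_expn_totient (R : nzRingType) (x : R) r l :
  x ^+ l = 1 -> coprime r l -> x ^+ (r ^ totient l) = x.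
Proof.
by move=> xl1 rl; rewrite -(expr_mod _ xl1) Euler_exp_totient // expr_mod // expr1.
Qed.

Lemma prime_order_dvdn (R : nzRingType) (x : R) l s :
  prime l -> x ^+ l = 1 -> x != 1 -> x ^+ s = 1 -> (l %| s)%N.
Proof.
move=> l_pr xl1 x_neq1 xs1.
have [m x_prim m_dvd_l] := prim_order_exists (prime_gt0 l_pr) xl1.
have m_eq_l : m = l.
  case/primeP: l_pr => _ /(_ m m_dvd_l) /orP[/eqP m1|/eqP //].
  by move: (prim_expr_order x_prim); rewrite m1 expr1 => /eqP; rewrite (negbTE x_neq1).
by rewrite -m_eq_l (prim_order_dvd x_prim) xs1.
Qed.

Section FactorsOfXlSub1.
Variables (F : finFieldType) (p k l : nat).
Hypotheses (p_pr : prime p) (cardF : #|F| = ((p ^ k) ^ 2)%N) (l_pr : prime l).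

Let cardF_pexp : #|F| = (p ^ (k * 2))%N. Proof. by rewrite expnM. Qed.
Let pcharFp : p \in [pchar F]. Proof. exact: card_finPcharP cardF_pexp p_pr. Qed.

Lemma SCRIM_irreducible_factors : (exists j, (l %| #|F| ^ j + p ^ k)%N) ->
  forall f : {poly F}, f \is monic -> irreducible_poly f -> f %| 'X^l - 1 -> SCRIM (p ^ k) f.
Proof.
move=> [j l_dvd] f f_monic f_irr f_dvd.
have f0 := coef0_dvdp_Xn_sub1 (prime_gt0 l_pr) f_dvd.
have [L [phi [a fa]]] := exists_root_in_extension f_irr f_monic.
have al1 := unity_root_dvdp f_dvd fa.
have conj_a : a^-1 ^+ (p ^ k) = a ^+ (#|F| ^ j).
  rewrite exprVn; apply: mulr1_eq; rewrite -exprD addnC.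
  by case/dvdnP: l_dvd => t ->; rewrite mulnC exprM al1 expr1n.
split=> //; apply/(dagger_poly_fixedP pcharFp k f_monic f_irr f0 fa).
by rewrite conj_a; apply: (root_expr_card pcharFp cardF_pexp _ fa).
Qed.

Lemma SCRIM_factor_eq_XsubC1 :
  coprime l (p ^ k) -> ~ (exists j, (l %| #|F| ^ j + p ^ k)%N) ->
  forall f : {poly F}, SCRIM (p ^ k) f -> f %| 'X^l - 1 -> f = 'X - 1.
Proof.
move=> l_coprime no_j f [f_monic f_irr f0 fE] f_dvd.
have [L [phi [a fa]]] := exists_root_in_extension f_irr f_monic.
have al1 := unity_root_dvdp f_dvd fa.
have [a1|a_neq1] := eqVneq a 1.
  rewrite -polyC1; apply: (monic_irreducible_root (phi := phi)) f_monic f_irr _.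
  by rewrite rmorph1 -a1.
have a0 : a != 0.
  by apply: contra_eq_neq al1 => ->; rewrite expr0n gtn_eqF ?prime_gt0 // eq_sym oner_eq0.
have a_period : a ^+ (#|F| ^ totient l) = a.
  by apply: expr_expn_totient al1 _; rewrite cardF coprimeXl // coprime_sym.
have /(dagger_poly_fixedP pcharFp k f_monic f_irr f0 fa) fa' := fE.
have totient_gt0_l : (0 < totient l)%N by rewrite totient_gt0 prime_gt0.
have [j conj_a] :=
  irreducible_root_conjugate pcharFp cardF_pexp f_irr fa totient_gt0_l a_period fa'.
case: no_j; exists j; apply: prime_order_dvdn l_pr al1 a_neq1 _.
by rewrite exprD -conj_a -exprMn mulVf // expr1n.
Qed.

End FactorsOfXlSub1.

Unset Implicit Arguments.

Theorem proposition2p3 (F : finFieldType) (p k q l : nat) :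
  prime p -> (0 < k)%N -> q = (p ^ k)%N -> #|F| = (q ^ 2)%N ->
  prime l -> odd l -> coprime l q ->
  (forall f : {poly F}, f \is monic -> irreducible_poly f ->
      f %| 'X^l - 1 -> SCRIM q f)
  \/
  (SCRIM q ('X - 1 : {poly F}) /\
   forall f : {poly F}, SCRIM q f -> f %| 'X^l - 1 -> f = 'X - 1).
Proof.
move=> p_pr _ -> cardF l_pr _ l_coprime.
have [l_dvd|no_j] := classic (exists j, (l %| #|F| ^ j + p ^ k)%N).
  by left; apply: SCRIM_irreducible_factors.
right; split; last exact: SCRIM_factor_eq_XsubC1.
by apply/SCRIM_XsubC1/(card_finPcharP (n := k * 2)) => //; rewrite cardF expnM.
Qed.
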